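(* For all integers $m\ge0$ and $k\ge0$, \[ \sum_{i=0}^{2k}(-1)^i\binom{m+k+i}{m+k-i}\binom{m+3k-i}{m-k+i}=(-1)^k\sum_{i=0}^{m}\binom{2k}{m-i}\binom{4k+i}{i}. \]
   Context: Binomial coefficients $\binom{a}{b}$ with integer $a\ge0$ are taken to be $0$ when $b<0$ or $b>a$. *)

From mathcomp Require Import all_boot all_order all_algebra.
Set Implicit Arguments. Unset Strict Implicit. Unset Printing Implicit Defensive.
Import Order.TTheory GRing.Theory Num.Theory.

Definition binz (a : nat) (b : int) : nat :=
  match b with
  | Posz n => 'C(a, n)
  | Negz _ => 0%N
  end.

(* The left-hand side is the coefficient of x^(2k) in Q_n(x) = b_n(x) b_n(-x)
   for n = m + k, where b_n(x) = \sum_a C(n + a, 2a) x^a are the Morgan-Voyce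
   polynomials, b_(n+2) = (2 + x) b_(n+1) - b_n.  A product of two solutions of
   second-order recurrences satisfies a fourth-order one, here with
   characteristic polynomial (1 - t)^4 + x^2 t (1 + t)^2.  The right-hand side
   is (-1)^k c_k(m), where c_k(j) is the coefficient of t^j in
   (1 + t)^(2k) / (1 - t)^(4k+1); since (1 - t)^4 c_(k+1) = (1 + t)^2 c_k as
   generating functions, the candidate coefficients (-1)^k c_k(n - k) obey the
   same recurrence in n, and both sequences agree for n <= 3. *)

From mathcomp Require Import all_boot all_order all_algebra.
From mathcomp Require Import zify ring.
Set Implicit Arguments. Unset Strict Implicit. Unset Printing Implicit Defensive.
Import Order.TTheory GRing.Theory Num.Theory.
Local Open Scope ring_scope.

Lemma mul_rec2 (R : comNzRingType) (u v : nat -> R) (a b : R) :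
  (forall n, u n.+2 = a * u n.+1 - u n) ->
  (forall n, v n.+2 = b * v n.+1 - v n) ->
  forall n, u n.+4 * v n.+4 = a * b * (u n.+3 * v n.+3)
     - (a ^+ 2 + b ^+ 2 - 2) * (u n.+2 * v n.+2) + a * b * (u n.+1 * v n.+1)
     - u n * v n.
Proof.
move=> urec vrec n.
rewrite !(urec n.+2) !(vrec n.+2) !(urec n.+1) !(vrec n.+1) !(urec n) !(vrec n).
ring.
Qed.

Lemma coef_comp_polyNX (R : comNzRingType) (p : {poly R}) i :
  (p \Po - 'X)`_i = (-1) ^+ i * p`_i.
Proof.
rewrite -scaleN1r comp_polyE.
under eq_bigr do rewrite exprZn scalerA mulrC.
rewrite -(poly_def _ (fun j => (-1) ^+ j * p`_j)) coef_poly.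
by case: ltnP => // le_p_i; rewrite nth_default ?mulr0.
Qed.

Definition morgan_voyce n : {poly int} := \poly_(a < n.+1) ('C(n + a, a.*2))%:R.

Lemma coef_morgan_voyce n a : (morgan_voyce n)`_a = ('C(n + a, a.*2))%:R.
Proof. by rewrite coef_poly; case: ltnP => // lt_n_a; rewrite bin_small //; lia. Qed.

Lemma morgan_voyce0 : morgan_voyce 0 = 1.
Proof.
apply/polyP => -[|a]; rewrite coef_morgan_voyce coef1 //=.
by rewrite bin_small //; lia.
Qed.

Lemma morgan_voyce1 : morgan_voyce 1 = 1 + 'X.
Proof.
apply/polyP => -[|[|a]]; rewrite coef_morgan_voyce coefD coef1 coefX //=.
by rewrite bin_small //; lia.
Qed.

Lemma morgan_voyceSS n :
  morgan_voyce n.+2 = (2 + 'X) * morgan_voyce n.+1 - morgan_voyce n.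
Proof.
apply/polyP => -[|a].
  by rewrite coefB mulrDl coefD coefXM mulr_natl coefMn !coef_morgan_voyce !bin0.
rewrite coefB mulrDl coefD coefXM mulr_natl coefMn !coef_morgan_voyce /=.
rewrite doubleS !addnS !addSn !binS !natz; lia.
Qed.

(* The coefficient of t^m in (1 + t)^M / (1 - t)^(N+1). *)
Definition binconv (N M m : nat) : nat := \sum_(i < m.+1) 'C(N + i, i) * 'C(M, m - i).

Lemma binconv0 N M : binconv N M 0 = 1%N.
Proof. by rewrite /binconv big_ord1 !bin0. Qed.

Lemma binconv00 m : binconv 0 0 m = 1%N.
Proof.
rewrite /binconv big_ord_recr /= subnn !bin0 binn big1 // => i _.
by rewrite bin0n subn_eq0 leqNgt ltn_ord muln0.
Qed.

Lemma binconvSl N M m : binconv N.+1 M m.+1 = (binconv N M m.+1 + binconv N.+1 M m)%N.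
Proof.
rewrite /binconv big_ord_recl [in X in _ = (X + _)%N]big_ord_recl /= !bin0.
rewrite -addnA; congr (_ + _)%N; rewrite -big_split; apply: eq_bigr => i _ /=.
by rewrite /bump /= !add1n subSS addnS binS -addSnnS mulnDl.
Qed.

Lemma binconvSr N M m : binconv N M.+1 m.+1 = (binconv N M m.+1 + binconv N M m)%N.
Proof.
rewrite /binconv big_ord_recr [in X in _ = (X + _)%N]big_ord_recr /= subnn !bin0.
rewrite addnAC; congr (_ + _)%N; rewrite -big_split; apply: eq_bigr => i _ /=.
by rewrite subSn ?binS ?mulnDr // -ltnS.
Qed.

Definition extz (f : nat -> nat) (z : int) : int :=
  if z is Posz m then (f m)%:Z else 0.

Lemma extz_pascal (f g h : nat -> nat) :
  f 0%N = g 0%N -> (forall m, f m.+1 = g m.+1 + h m)%N ->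
  forall z, extz f z = extz g z + extz h (z - 1).
Proof.
move=> fg0 fgS [[|m]|n] /=; rewrite ?fg0 ?addr0 //.
by rewrite subn1 fgS PoszD.
Qed.

Definition binconvz N M := extz (binconv N M).

Lemma binconvzSl N M z : binconvz N.+1 M z = binconvz N M z + binconvz N.+1 M (z - 1).
Proof. by apply: extz_pascal; [rewrite !binconv0 | exact: binconvSl]. Qed.

Lemma binconvzSr N M z : binconvz N M.+1 z = binconvz N M z + binconvz N M (z - 1).
Proof. by apply: extz_pascal; [rewrite !binconv0 | exact: binconvSr]. Qed.

(* On generating functions: (1 - t)^4 F_(N+4, M+2) = (1 + t)^2 F_(N, M). *)
Lemma binconvz_rec N M z :
  binconvz N.+4 M.+2 z =
    4 * binconvz N.+4 M.+2 (z - 1) - 6 * binconvz N.+4 M.+2 (z - 2)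
    + 4 * binconvz N.+4 M.+2 (z - 3) - binconvz N.+4 M.+2 (z - 4)
    + binconvz N M z + 2 * binconvz N M (z - 1) + binconvz N M (z - 2).
Proof.
pose c N' M' (j : nat) := binconvz N' M' (z - j%:Z).
have shift j : z - j.+1%:Z = z - j%:Z - 1 by rewrite -addn1 PoszD opprD addrA.
have cSl N' M' j : c N' M' j = c N'.+1 M' j - c N'.+1 M' j.+1.
  by rewrite /c shift binconvzSl addrK.
have cSr N' M' j : c N' M'.+1 j = c N' M' j + c N' M' j.+1.
  by rewrite /c shift binconvzSr.
suff : c N.+4 M.+2 0 = 4 * c N.+4 M.+2 1 - 6 * c N.+4 M.+2 2
    + 4 * c N.+4 M.+2 3 - c N.+4 M.+2 4 + c N M 0 + 2 * c N M 1 + c N M 2.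
  by rewrite /c !subr0.
rewrite !(cSr N.+4 M.+1) !(cSr N.+4 M).
rewrite !(cSl N) !(cSl N.+1) !(cSl N.+2) !(cSl N.+3).
ring.
Qed.

Definition mvnorm n := morgan_voyce n * (morgan_voyce n \Po - 'X).

Lemma mvnorm_rec n :
  mvnorm n.+4 = 4 * mvnorm n.+3 - 6 * mvnorm n.+2 + 4 * mvnorm n.+1 - mvnorm n
                - 'X^2 * (mvnorm n.+3 + 2 * mvnorm n.+2 + mvnorm n.+1).
Proof.
have mvNX_SS j : morgan_voyce j.+2 \Po - 'X
    = (2 - 'X) * (morgan_voyce j.+1 \Po - 'X) - (morgan_voyce j \Po - 'X).
  by rewrite morgan_voyceSS comp_polyB comp_polyM comp_polyD comp_polyX rmorph_nat.
by rewrite /mvnorm (mul_rec2 morgan_voyceSS mvNX_SS); ring.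
Qed.

Lemma mvnorm_initial :
  [/\ mvnorm 0 = 1, mvnorm 1 = 1 - 'X^2, mvnorm 2 = 1 - 7 * 'X^2 + 'X^4
    & mvnorm 3 = 1 - 26 * 'X^2 + 13 * 'X^4 - 'X^6].
Proof.
rewrite /mvnorm !morgan_voyceSS morgan_voyce1 morgan_voyce0.
rewrite !(comp_polyB, comp_polyD, comp_polyM, comp_polyX, rmorph_nat, rmorph1).
by split; ring.
Qed.

Definition mvnorm_coef n k : int :=
  (-1) ^+ k * binconvz (4 * k) (2 * k) (n%:Z - k%:Z).

Lemma mvnorm_coef_eq0 n k : (n < k)%N -> mvnorm_coef n k = 0.
Proof.
move=> lt_n_k; rewrite /mvnorm_coef.
have [d ->] : exists d, n%:Z - k%:Z = Negz d by exists (k - n).-1; rewrite NegzE; lia.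
by rewrite /= mulr0.
Qed.

Lemma mvnorm_coef0 n : mvnorm_coef n 0 = 1.
Proof. by rewrite /mvnorm_coef subr0 /= binconv00. Qed.

Lemma mvnorm_coef_rec n k :
  mvnorm_coef n.+4 k.+1 =
    4 * mvnorm_coef n.+3 k.+1 - 6 * mvnorm_coef n.+2 k.+1
    + 4 * mvnorm_coef n.+1 k.+1 - mvnorm_coef n k.+1
    - (mvnorm_coef n.+3 k + 2 * mvnorm_coef n.+2 k + mvnorm_coef n.+1 k).
Proof.
have coefE n' k' z : n'%:Z - k'%:Z = z ->
    mvnorm_coef n' k' = (-1) ^+ k' * binconvz (4 * k') (2 * k') z.
  by rewrite /mvnorm_coef => ->.
set z := n.+3%:Z - k%:Z.
rewrite (@coefE n.+4 k.+1 z) ?(@coefE n.+3 k.+1 (z - 1))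
  ?(@coefE n.+2 k.+1 (z - 2)) ?(@coefE n.+1 k.+1 (z - 3)) ?(@coefE n k.+1 (z - 4))
  ?(@coefE n.+3 k z) ?(@coefE n.+2 k (z - 1)) ?(@coefE n.+1 k (z - 2));
  try by rewrite /z; lia.
have -> : (4 * k.+1 = (4 * k).+4)%N by lia.
have -> : (2 * k.+1 = (2 * k).+2)%N by lia.
by rewrite binconvz_rec exprS; ring.
Qed.

Lemma coef_mvnorm_even n k : (mvnorm n)`_k.*2 = mvnorm_coef n k.
Proof.
have coef_natM (j : nat) (p : {poly int}) i : (j%:R * p)`_i = j%:R * p`_i.
  by rewrite !mulr_natl coefMn.
elim/ltn_ind: n k => -[|[|[|[|n]]]] IH k; last first.
  rewrite mvnorm_rec !(coefB, coefD, coef_natM) coefXnM !IH; [|lia..].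
  case: k => [|k]; first by rewrite !mvnorm_coef0.
  by rewrite mvnorm_coef_rec doubleS /= !subSS subn0 !(coefD, coef_natM) !IH; [|lia..].
all: case: mvnorm_initial => mv0 mv1 mv2 mv3.
all: rewrite ?mv0 ?mv1 ?mv2 ?mv3 ?(coefB, coefD, coef_natM) coef1 ?coefXn.
all: case: k => [|[|[|[|k]]]]; try by rewrite mvnorm_coef_eq0.
all: by rewrite /mvnorm_coef /= /binconv !big_ord_recr big_ord0.
Qed.

Lemma binz_sym n i : binz (n + i) (n%:Z - i%:Z) = 'C(n + i, i.*2).
Proof.
case: (leqP i n) => [le_i_n | lt_n_i].
  rewrite subzn //= -[RHS]bin_sub -addnn; [congr 'C(_, _) | ]; lia.
have -> : n%:Z - i%:Z = Negz (i - n).-1 by rewrite NegzE; lia.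
by rewrite bin_small // -addnn; lia.
Qed.

Lemma mvnorm_summand m k i : (i < (2 * k).+1)%N ->
  (-1) ^+ i * ((binz (m + k + i) ((m + k)%:Z - i%:Z))%:Z
               * (binz (m + 3 * k - i) (m%:Z - k%:Z + i%:Z))%:Z)
  = (morgan_voyce (m + k))`_i * (morgan_voyce (m + k) \Po - 'X)`_(2 * k - i).
Proof.
rewrite ltnS => le_i_2k.
have -> : (m + 3 * k - i = m + k + (2 * k - i))%N by lia.
have -> : m%:Z - k%:Z + i%:Z = (m + k)%:Z - (2 * k - i)%:Z by lia.
have sign : (-1) ^+ (2 * k - i) = (-1) ^+ i :> int.
  by rewrite -signr_odd oddB // mul2n odd_double signr_odd.
rewrite !binz_sym coef_comp_polyNX !coef_morgan_voyce sign !natz; ring.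
Qed.

Theorem mainTheorem11 (m k : nat) :
  \sum_(0 <= i < (2 * k).+1)
     (-1) ^+ i * ((binz (m + k + i) ((m + k)%:Z - i%:Z))%:Z
                  * (binz (m + 3 * k - i) (m%:Z - k%:Z + i%:Z))%:Z)
  = (-1) ^+ k * (\sum_(0 <= i < m.+1)
                   ('C(2 * k, m - i) * 'C(4 * k + i, i))%N)%:Z :> int.
Proof.
rewrite [LHS]big_mkord.
rewrite (eq_bigr _ (fun (i : 'I_(2 * k).+1) _ => mvnorm_summand m (ltn_ord i))).
rewrite -coefM -/(mvnorm _) mul2n coef_mvnorm_even /mvnorm_coef PoszD addrK /= -mul2n.
by rewrite /binconv big_mkord; congr (_ * Posz _); apply: eq_bigr => i _; rewrite mulnC.
Qed.
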